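(* Let $m\le n$, let $\mathbf A\in\mathbb R^{m\times n}$ have columns in general position, i.e., any $m$ columns of $\mathbf A$ span $\mathbb R^m$, and let $\mathbf b\in\mathbb R^m$. Then every minimizer $\mathbf z^\star\in\arg\min_{\mathbf z\in\mathbb R^n}\|\mathbf z\|_\infty$ subject to $\mathbf A\mathbf z=\mathbf b$ satisfies $$\#\{i\in[n]:|z^\star_i|=\|\mathbf z^\star\|_\infty\}\ge n-m+1.$$ *)

From mathcomp Require Import all_boot all_order all_algebra.
From mathcomp Require Export reals.
Set Implicit Arguments. Unset Strict Implicit. Unset Printing Implicit Defensive.
Import Order.TTheory GRing.Theory Num.Theory.
Local Open Scope ring_scope.

Definition linf_norm (R : realType) (n : nat) (z : 'cV[R]_n) : R :=
  \big[Num.max/0]_(i < n) `|z i ord0|.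

(* Columns of A in general position: any m (distinct) columns span R^m,
   i.e. the m x m submatrix formed by them has rank m. *)
Definition cols_general_position (R : realType) (m n : nat) (A : 'M[R]_(m, n)) : Prop :=
  forall f : 'I_m -> 'I_n, injective f -> \rank (colsub f A) = m.

Definition linf_minimizer (R : realType) (m n : nat) (A : 'M[R]_(m, n))
  (b : 'cV[R]_m) (z : 'cV[R]_n) : Prop :=
  A *m z = b /\ forall w : 'cV[R]_n, A *m w = b -> linf_norm z <= linf_norm w.

(** If fewer than n - m + 1 coordinates of z attain the norm t = ||z||_oo,
   at least m coordinates stay strictly below t, and by general position the
   corresponding columns of A form an invertible matrix.  Moving the maximal
   coordinates towards 0 and compensating with those m free coordinates gives
   a direction d in the kernel of A along which ||z + e d||_oo < t for small
   e > 0, contradicting the minimality of z. *)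
From mathcomp Require Import all_boot all_order all_algebra.
From mathcomp Require Import reals.
From mathcomp Require Import lra zify.
Import Order.TTheory GRing.Theory Num.Theory.
Local Open Scope ring_scope.

Lemma finite_pos_uniform (R : realFieldType) (I : finType) (P : I -> R -> Prop) :
  (forall i, exists2 e, 0 < e & forall x, 0 < x <= e -> P i x) ->
  exists2 e, 0 < e & forall i x, 0 < x <= e -> P i x.
Proof.
move=> hP.
suff [e e0 he] : exists2 e : R, 0 < e &
    forall i, i \in enum I -> forall x, 0 < x <= e -> P i x.
  by exists e => // i; apply: he; rewrite mem_enum.
elim: (enum I) => [|i s [e e0 he]]; first by exists 1.
have [ei ei0 hei] := hP i.
exists (Num.min ei e); first by rewrite lt_min ei0 e0.
move=> j; rewrite inE => /predU1P [-> | js] x /andP [x0];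
  rewrite le_min => /andP [xei xe]; [apply: hei | apply: he];
  by rewrite ?x0.
Qed.

Section LinfNorm.
Variables (R : realType) (n : nat).
Implicit Types z d : 'cV[R]_n.

Lemma linf_norm_ge0 z : 0 <= linf_norm z.
Proof.
by apply: (big_ind (fun x : R => 0 <= x)) => // x y x0 _; rewrite le_max x0.
Qed.

Lemma normr_le_linf_norm z i : `|z i ord0| <= linf_norm z.
Proof. by rewrite /linf_norm (bigD1 i) //= le_max lexx. Qed.

Lemma linf_norm_lt z t :
  0 < t -> (forall i, `|z i ord0| < t) -> linf_norm z < t.
Proof.
by move=> t0 hz; apply: (big_ind (fun x : R => x < t)) => // x y; rewrite gt_max => ->.
Qed.

Lemma linf_norm0_argmax z :
  linf_norm z = 0 -> forall i, `|z i ord0| = linf_norm z.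
Proof.
by move=> z0 i; apply/eqP; rewrite eq_le normr_le_linf_norm z0 normr_ge0.
Qed.

Lemma linf_norm_descent z d :
  0 < linf_norm z ->
  (forall i, `|z i ord0| = linf_norm z -> d i ord0 = - z i ord0) ->
  exists2 e, 0 < e & linf_norm (z + e *: d) < linf_norm z.
Proof.
set t := linf_norm z => t0 hd.
have [e e0 he] : exists2 e, 0 < e &
    forall i x, 0 < x <= e -> `|z i ord0 + x * d i ord0| < t.
  apply: finite_pos_uniform => i.
  have zit := normr_le_linf_norm z i; rewrite -/t in zit.
  have [zmax | zlt] := eqVneq `|z i ord0| t.
    exists 1 => // x /andP [x0 x1].
    rewrite hd // mulrN -{1}[z i ord0]mul1r -mulrBl normrM zmax.
    by rewrite ger0_norm ?subr_ge0 //; nra.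
  have {}zlt : `|z i ord0| < t by rewrite lt_neqAle zlt.
  have d0 := normr_ge0 (d i ord0).
  exists ((t - `|z i ord0|) / (1 + `|d i ord0|)).
    by rewrite divr_gt0 ?subr_gt0 //; lra.
  move=> x /andP [x0]; rewrite ler_pdivlMr; last by lra.
  move=> hx; apply: le_lt_trans (ler_normD _ _) _.
  rewrite normrM (gtr0_norm x0); nra.
exists e => //; apply: linf_norm_lt => // i.
by rewrite !mxE; apply: he; rewrite e0 lexx.
Qed.

End LinfNorm.

Lemma general_position_supported_solution {R : realType} {m n : nat}
    {A : 'M[R]_(m, n)} {T : {set 'I_n}} (v : 'cV[R]_m) :
  cols_general_position A -> (m <= #|T|)%N ->
  exists2 c : 'cV[R]_n, A *m c = v & forall i, i \notin T -> c i ord0 = 0.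
Proof.
move=> hA hT.
pose f (j : 'I_m) : 'I_n := enum_val (widen_ord hT j).
have f_inj : injective f.
  by move=> j k /enum_val_inj /(congr1 val) /= /val_inj.
have fT j : f j \in T by apply: enum_valP.
have Bu : colsub f A \in unitmx by rewrite -row_free_unit /row_free hA.
exists (colsub f 1%:M *m (invmx (colsub f A) *m v)).
  by rewrite !mulmxA mulmx_colsub mulmx1 mulmxV // mul1mx.
move=> i iT; rewrite mxE big1 // => j _; rewrite !mxE.
have /negbTE -> : i != f j by apply: contraNneq iT => ->.
by rewrite mulr0n mul0r.
Qed.

Theorem lemmaA2 (R : realType) (m n : nat) (A : 'M[R]_(m, n)) (b : 'cV[R]_m)
  (hm0 : (0 < m)%N) (hmn : (m <= n)%N)
  (hA : cols_general_position A) (z : 'cV[R]_n)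
  (hz : linf_minimizer A b z) :
  (n - m + 1 <= #|[set i : 'I_n | (`|z i ord0| == linf_norm z)%R]|)%N.
Proof.
set S := [set i | _]; have [// | S_small] := leqP (n - m + 1) #|S|.
have hS i : (i \in S) = (`|z i ord0| == linf_norm z) by rewrite inE.
have t0 : 0 < linf_norm z.
  rewrite lt_neqAle linf_norm_ge0 andbT; apply/eqP => /esym/linf_norm0_argmax zS.
  have S_full : S = setT by apply/setP => i; rewrite hS zS eqxx inE.
  by move: S_small; rewrite S_full cardsT card_ord; lia.
have free_big : (m <= #|~: S|)%N.
  by move: S_small (cardsC S); rewrite card_ord; lia.
pose d1 : 'cV[R]_n := \col_i (if i \in S then - z i ord0 else 0).
have [c Ac c0] := general_position_supported_solution (- (A *m d1)) hA free_big.
have Ad : A *m (d1 + c) = 0 by rewrite mulmxDr Ac subrr.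
have [e _ descent] : exists2 e, 0 < e & linf_norm (z + e *: (d1 + c)) < linf_norm z.
  apply: linf_norm_descent => // i /eqP; rewrite -hS => iS.
  by rewrite !mxE iS c0 ?addr0 // inE iS.
have := hz.2 (z + e *: (d1 + c)).
rewrite mulmxDr -scalemxAr Ad scaler0 addr0 hz.1 => /(_ erefl).
by rewrite leNgt descent.
Qed.
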